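(* If a graph $G$ contains a vertex of degree at least four that is contained in at most one cycle of $G$, then $G\notin\mathcal{G}^{\rm SSP}$.
   Context: All graphs are finite, simple, undirected. For a graph $G$ on $\{1,\ldots,n\}$, $\mathcal{S}(G)$ is the set of real symmetric $n\times n$ matrices $A=(a_{ij})$ with $a_{ij}\neq0$ iff $\{i,j\}\in E(G)$ for $i\neq j$ (diagonal arbitrary). A real symmetric $A$ has the strong spectral property (SSP) if the only real symmetric $X$ with $A\circ X=0$, $I\circ X=0$, $AX-XA=0$ is $X=0$ ($\circ$ = entrywise product). $\mathcal{G}^{\rm SSP}$ is the set of graphs $G$ such that every matrix in $\mathcal{S}(G)$ has the SSP. *)

From HB Require Import structures.
From mathcomp Require Import all_boot all_order all_algebra.
From mathcomp Require Import Rstruct.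
From Stdlib Require Import Rdefinitions.
Set Implicit Arguments. Unset Strict Implicit. Unset Printing Implicit Defensive.
Import Order.TTheory GRing.Theory Num.Theory.
Local Open Scope ring_scope.

Definition simple_graph (n : nat) (e : rel 'I_n) : Prop :=
  symmetric e /\ irreflexive e.

Definition degree (n : nat) (e : rel 'I_n) (v : 'I_n) : nat :=
  #|[set u | e v u]|.

(* A cycle of G is given by a duplicate-free list of at least 3 vertices
   [v0; ...; v_{k-1}] with v_i ~ v_{i+1} and v_{k-1} ~ v0. *)
Definition is_cycle_seq (n : nat) (e : rel 'I_n) (s : seq 'I_n) : bool :=
  [&& leq 3 (size s), uniq s & cycle e s].

(* Edge set of the cycle given by s, as a set of ordered pairs (both
   orientations of each edge).  Two cycle sequences represent the same
   cycle (subgraph) iff they have the same edge set. *)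
Definition cycle_edges (n : nat) (s : seq 'I_n) : {set 'I_n * 'I_n} :=
  [set p | (next s p.1 == p.2) || (next s p.2 == p.1)] :&:
  [set p | (p.1 \in s) && (p.2 \in s)].

Definition on_at_most_one_cycle (n : nat) (e : rel 'I_n) (v : 'I_n) : Prop :=
  forall s1 s2 : seq 'I_n,
    is_cycle_seq e s1 -> is_cycle_seq e s2 -> v \in s1 -> v \in s2 ->
    cycle_edges s1 = cycle_edges s2.

Definition in_S (n : nat) (e : rel 'I_n) (A : 'M[R]_n) : Prop :=
  A^T = A /\ forall i j : 'I_n, i != j -> (A i j != 0) = e i j.

Definition hadamard (n : nat) (A B : 'M[R]_n) : 'M[R]_n :=
  \matrix_(i, j) (A i j * B i j).

Definition SSP (n : nat) (A : 'M[R]_n) : Prop :=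
  forall X : 'M[R]_n, X^T = X -> hadamard A X = 0 -> hadamard 1%:M X = 0 ->
    A *m X - X *m A = 0 -> X = 0.

Definition in_GSSP (n : nat) (e : rel 'I_n) : Prop :=
  forall A : 'M[R]_n, in_S e A -> SSP A.

From Stdlib Require Import Rdefinitions.
From mathcomp Require Import all_boot all_order all_algebra.
From mathcomp Require Import Rstruct.
From mathcomp Require Import zify.
Set Implicit Arguments. Unset Strict Implicit. Unset Printing Implicit Defensive.
Import Order.TTheory GRing.Theory Num.Theory.
Local Open Scope ring_scope.

(* Call two distinct neighbours of v linked when they lie in the same component
   of G - v.  A path between linked neighbours a, b avoiding v closes a cycle
   through v whose edges at v are va and vb; since v lies on at most one cycle,
   all linked pairs are the same pair.  As deg v >= 4, there are therefore
   distinct neighbours a1, a2 and distinct neighbours a3, a4 such that the union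
   S of the components of a1 and a2 meets N(v) exactly in {a1, a2}, the union T
   of the components of a3 and a4 meets N(v) exactly in {a3, a4}, and S and T
   are disjoint.
   Let A be minus the Laplacian of G - v, bordered by weights w on the edges at
   v, where w = 1 at a1 and a3 and w = -1 elsewhere.  The indicator vectors x of
   S and y of T lie in ker A, have disjoint supports and are constant along the
   edges of G - v.  So X = x y^T + y x^T is a nonzero symmetric matrix with zero
   diagonal that vanishes on the edges of G and satisfies AX = XA = 0: the
   matrix A in S(G) does not have the SSP. *)

Lemma setU_closed (T : finType) (r : rel T) (A B : {set T}) :
  closed r A -> closed r B -> closed r (A :|: B).
Proof.
by move=> clA clB s t st; rewrite !in_setU (clA _ _ st) (clB _ _ st).
Qed.

Section CycleEdges.
Variables (n : nat) (x : 'I_n) (s : seq 'I_n).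
Hypothesis uniq_xs : uniq (x :: s).

Lemma next_cons_head : next (x :: s) x = head x s.
Proof. by rewrite next_nth mem_head /= eqxx nth0. Qed.

Lemma prev_cons_last : prev (x :: s) x = last x s.
Proof.
have /andP[xs _] := uniq_xs.
rewrite prev_nth mem_head memNindex //.
by rewrite -[size s]/((size (x :: s)).-1) nth_last.
Qed.

Lemma cycle_edges_cons c :
  ((x, c) \in cycle_edges (x :: s)) = (c == head x s) || (c == last x s).
Proof.
have next_c : (next (x :: s) c == x) = (c == last x s).
  rewrite -prev_cons_last; apply/eqP/eqP => [next_c|->].
  - by rewrite -(prev_next uniq_xs c) next_c.
  - by rewrite (next_prev uniq_xs).
rewrite in_setI !in_set next_cons_head /= next_c mem_head /= (eq_sym (head x s)).
case: eqP => [->|_] /=; first by rewrite -next_cons_head mem_next mem_head.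
by case: eqP => [->|_]; rewrite ?andbF // -prev_cons_last mem_prev mem_head.
Qed.

End CycleEdges.

Section Punctured.
Variables (n : nat) (e : rel 'I_n) (v : 'I_n).

Definition nbhd : {set 'I_n} := [set u | e v u].

Definition punctured : rel 'I_n := fun s t => [&& e s t, s != v & t != v].

Definition component (a : 'I_n) : {set 'I_n} :=
  [set t | [&& a != v, t != v & connect punctured a t]].

Definition linked (a b : 'I_n) : bool :=
  [&& e v a, e v b, a != b & b \in component a].

Hypothesis e_sym : symmetric e.

Lemma punctured_sym : symmetric punctured.
Proof.
by move=> s t; rewrite /punctured e_sym; case: (s != v); rewrite ?andbT ?andbF.
Qed.

Let connect_punctured_sym := sym_connect_sym punctured_sym.

Lemma notin_component a : v \notin component a.
Proof. by rewrite inE eqxx andbF. Qed.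

Lemma mem_component a : a != v -> a \in component a.
Proof. by move=> av; rewrite inE av connect0. Qed.

Lemma component_sym a b : b \in component a -> a \in component b.
Proof. by rewrite !inE connect_punctured_sym => /and3P[-> -> ->]. Qed.

Lemma component_closed a : closed punctured (component a).
Proof.
move=> s t st; have /and3P[_ sv tv] := st.
rewrite !inE sv tv; congr [&& _, _ & _].
exact: (connect_closed connect_punctured_sym a st).
Qed.

Lemma disjoint_component (S : {set 'I_n}) a :
  closed punctured S -> a \notin S -> [disjoint component a & S].
Proof.
move=> clS aS; rewrite disjoints_subset; apply/subsetP => i.
rewrite !inE => /and3P[_ _ ai].
by rewrite -(closed_connect clS ai).
Qed.

Hypothesis e_irr : irreflexive e.

Lemma nbhd_neq a : e v a -> a != v.
Proof. by apply: contraTneq => ->; rewrite e_irr. Qed.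

Lemma mem_nbhd_component a : e v a -> a \in nbhd :&: component a.
Proof. by move=> eva; rewrite in_setI inE eva mem_component ?nbhd_neq. Qed.

Section Cover.
Variable A : {set 'I_n}.
Hypothesis linked_cover : forall c d, linked c d -> c \in A.

Lemma nbhd_component_subset a :
  a \in A -> e v a -> nbhd :&: component a \subset A.
Proof.
move=> aA eva; apply/subsetP => j /setIP[evj ja]; rewrite inE in evj.
have [-> // | ja'] := eqVneq j a.
apply: (linked_cover (d := a)).
by rewrite /linked evj eva ja' (component_sym ja).
Qed.

Lemma nbhd_component_lone a :
  a \in nbhd :\: A -> nbhd :&: component a = [set a].
Proof.
case/setDP; rewrite inE => eva aA.
apply/eqP; rewrite eqEsubset sub1set mem_nbhd_component // andbT.
apply/subsetP => j /setIP[evj ja]; rewrite inE in evj; rewrite in_set1.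
apply: contraNT aA => ja'.
by apply: (linked_cover (d := j)); rewrite /linked eva evj eq_sym ja' ja.
Qed.

End Cover.

Lemma path_punctured_notin a p :
  a != v -> path punctured a p -> v \notin a :: p.
Proof.
elim: p a => [|b p IHp] a av /=; first by rewrite inE eq_sym.
case/andP => /and3P[_ _ bv] ab; rewrite inE eq_sym negb_or av.
exact: IHp.
Qed.

Lemma linked_cycle a b : linked a b ->
  exists s, [/\ is_cycle_seq e s, v \in s &
             forall c, ((v, c) \in cycle_edges s) = (c == a) || (c == b)].
Proof.
case/and4P=> eva evb ab; rewrite inE => /and3P[av _ /connectP[p0 path_p0 b_p0]].
move: ab evb; rewrite b_p0; case/shortenP: path_p0 => p path_p uniq_p _ ab evb.
have uniq_vp : uniq (v :: a :: p).
  by rewrite cons_uniq uniq_p path_punctured_notin.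
exists (v :: a :: p); split; last 1 [exact: mem_head | exact: cycle_edges_cons].
rewrite /is_cycle_seq uniq_vp /= rcons_path eva e_sym evb andbT.
have -> : (2 < (size p).+2)%N.
  by case: p ab {path_p uniq_p uniq_vp evb} => //=; rewrite eqxx.
by rewrite (sub_path _ path_p) // => s t /and3P[].
Qed.

Hypothesis one_cycle : on_at_most_one_cycle e v.

Lemma linked_unique a b c d : linked a b -> linked c d -> (c == a) || (c == b).
Proof.
move=> /linked_cycle[s1 [cyc1 vs1 edges1]] /linked_cycle[s2 [cyc2 vs2 edges2]].
by rewrite -edges1 (one_cycle cyc1 cyc2 vs1 vs2) edges2 eqxx.
Qed.

Lemma exists_linked_cover : (1 < #|nbhd|)%N ->
  exists a1 a2, [/\ e v a1, e v a2, a1 != a2 &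
                    forall c d, linked c d -> c \in [set a1; a2]].
Proof.
case: (pickP (fun p => linked p.1 p.2)) => [[a b] /= lab | no_link] nbhd2.
  have /and4P[eva evb ab _] := lab.
  by exists a, b; split=> // c d /(linked_unique lab); rewrite in_set2.
have [a [b [] ]] := card_gt1P nbhd2; rewrite !inE => eva evb ab.
by exists a, b; split=> // c d lcd; have := no_link (c, d); rewrite /= lcd.
Qed.

Lemma two_separated_pairs : (3 < #|nbhd|)%N ->
  exists (S T : {set 'I_n}) (a1 a2 a3 a4 : 'I_n),
    [/\ [/\ v \notin S, v \notin T, closed punctured S & closed punctured T],
        [disjoint S & T] &
        [/\ a1 != a2, a3 != a4,
            nbhd :&: S = [set a1; a2] & nbhd :&: T = [set a3; a4]]].
Proof.
move=> nbhd4.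
have [a1 [a2 [ev1 ev2 a12 cover]]] := exists_linked_cover (ltnW (ltnW nbhd4)).
set A := [set a1; a2].
have [a3 [a4 [N3 N4 a34]]] :
    exists a3 a4, [/\ a3 \in nbhd :\: A, a4 \in nbhd :\: A & a3 != a4].
  apply/card_gt1P; rewrite cardsD.
  by have := subset_leq_card (subsetIr nbhd A); rewrite cards2 a12; lia.
set S := component a1 :|: component a2.
set T := component a3 :|: component a4.
have NS : nbhd :&: S = A.
  apply/eqP; rewrite eqEsubset setIUr subUset.
  rewrite !nbhd_component_subset ?set21 ?set22 //=.
  by apply/subsetP => j /set2P[]->; rewrite in_setU mem_nbhd_component ?orbT.
have notin_S a : a \in nbhd :\: A -> a \notin S.
  by case/setDP=> aN; apply: contra => aS; rewrite -NS in_setI aN.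
have closed_S : closed punctured S.
  by apply: setU_closed; apply: component_closed.
have closed_T : closed punctured T.
  by apply: setU_closed; apply: component_closed.
exists S, T, a1, a2, a3, a4; split.
- by rewrite !in_setU !negb_or !notin_component.
- rewrite disjoint_sym disjoints_subset subUset -!disjoints_subset.
  by rewrite !disjoint_component ?notin_S.
- split=> //; rewrite /T setIUr.
  by rewrite (nbhd_component_lone cover N3) (nbhd_component_lone cover N4).
Qed.

End Punctured.

Lemma kernel_pair_not_SSP (n : nat) (A : 'M[R]_n) (x y : 'cV[R]_n)
    (i0 j0 : 'I_n) :
  A^T = A -> A *m x = 0 -> A *m y = 0 ->
  (forall i, x i 0 * y i 0 = 0) ->
  (forall i j, i != j -> A i j != 0 -> x i 0 * y j 0 + y i 0 * x j 0 = 0) ->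
  x i0 0 != 0 -> y j0 0 != 0 -> ~ SSP A.
Proof.
move=> A_sym Ax Ay xy0 xy_edge xi0 yj0 ssp.
pose X := x *m y^T + y *m x^T.
have XE i j : X i j = x i 0 * y j 0 + y i 0 * x j 0.
  by rewrite !mxE !big_ord1 !mxE.
have X_diag i : X i i = 0 by rewrite XE [y i 0 * _]mulrC xy0 addr0.
have xA : x^T *m A = 0 by rewrite -[A]A_sym -trmx_mul Ax trmx0.
have yA : y^T *m A = 0 by rewrite -[A]A_sym -trmx_mul Ay trmx0.
have /matrixP/(_ i0 j0) : X = 0.
  apply: ssp.
  - apply/matrixP => i j; rewrite mxE !XE addrC.
    by rewrite [x j 0 * _]mulrC [y j 0 * _]mulrC.
  - apply/matrixP => i j; rewrite [hadamard _ _ _ _]mxE [RHS]mxE.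
    have [<-|ij] := eqVneq i j; first by rewrite X_diag mulr0.
    have [->|Aij] := eqVneq (A i j) 0; first by rewrite mul0r.
    by rewrite XE xy_edge ?mulr0.
  - apply/matrixP => i j; rewrite [hadamard _ _ _ _]mxE [RHS]mxE mxE.
    by have [<-|ij] := eqVneq i j; rewrite ?X_diag ?mulr0 ?mul0r.
  - rewrite /X mulmxDr mulmxDl !mulmxA Ax Ay -!mulmxA xA yA.
    by rewrite !mulmx0 !mul0mx !addr0 subrr.
have yi0 : y i0 0 = 0.
  by have /eqP := xy0 i0; rewrite mulf_eq0 (negbTE xi0) => /eqP.
rewrite XE mxE yi0 mul0r addr0 => /eqP.
by rewrite mulf_eq0 (negbTE xi0) (negbTE yj0).
Qed.

Section HubMatrix.
Variables (n : nat) (e : rel 'I_n) (v : 'I_n) (w : 'I_n -> R).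
Hypotheses (e_sym : symmetric e) (e_irr : irreflexive e).

Definition hubmx : 'M[R]_n := \matrix_(i, j)
  if i == j then (if i == v then 0 else - #|[set k | punctured e v i k]|%:R)
  else if e i j then (if i == v then w j else if j == v then w i else 1) else 0.

Definition hub_null (x : 'I_n -> R) : Prop :=
  [/\ x v = 0, forall s t, punctured e v s t -> x s = x t &
      \sum_(j in nbhd e v) w j * x j = 0].

Lemma hubmx_sym : hubmx^T = hubmx.
Proof.
apply/matrixP => i j; rewrite !mxE (eq_sym j i) (e_sym j i).
case: eqVneq => [-> // | ij]; case: (e i j) => //.
case: (eqVneq i v) => [iv|_]; case: (eqVneq j v) => [jv|_] //.
by rewrite iv jv eqxx in ij.
Qed.

Lemma hubmx_in_S : (forall j, e v j -> w j != 0) -> in_S e hubmx.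
Proof.
move=> w_neq0; split=> [|i j ij]; first exact: hubmx_sym.
rewrite mxE (negbTE ij); case: ifP => [eij|_]; last by rewrite eqxx.
case: (eqVneq i v) => [iv|_]; first by apply: w_neq0; rewrite -iv.
case: (eqVneq j v) => [jv|_]; last by rewrite oner_neq0.
by apply: w_neq0; rewrite -jv e_sym.
Qed.

Lemma hubmx_null x : hub_null x -> hubmx *m \col_i x i = 0.
Proof.
case=> xv x_const x_bal; apply/matrixP => i k; rewrite (ord1 k) !mxE.
have [-> | iv] := eqVneq i v.
  rewrite -[RHS]x_bal [RHS]big_mkcond; apply: eq_bigr => j _; rewrite !mxE inE.
  have [<- | vj] := eqVneq v j; first by rewrite xv e_irr mulr0.
  by rewrite eqxx; case: (e v j); rewrite ?mul0r.
set N := [set k | punctured e v i k].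
transitivity (\sum_j ((if j == i then - #|N|%:R * x i else 0)
                      + (if j \in N then x i else 0))).
  apply: eq_bigr => j _; rewrite !mxE inE (eq_sym i j) (negbTE iv).
  have [-> | ji] := eqVneq j i; first by rewrite /punctured e_irr addr0.
  rewrite add0r /punctured iv /=; case eij: (e i j); last by rewrite mul0r.
  have [-> | jv] := eqVneq j v; first by rewrite xv mulr0.
  by rewrite /= mul1r; apply/esym/x_const; rewrite /punctured eij iv jv.
rewrite big_split /= -big_mkcond big_pred1_eq -big_mkcond /= sumr_const.
by rewrite mulNr mulr_natl addNr.
Qed.

Lemma hubmx_not_SSP x y i0 j0 : hub_null x -> hub_null y ->
  (forall i, x i * y i = 0) -> x i0 != 0 -> y j0 != 0 -> ~ SSP hubmx.
Proof.
move=> x_null y_null xy0 xi0 yj0.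
have [xv x_const _] := x_null; have [yv y_const _] := y_null.
apply: (@kernel_pair_not_SSP _ _ (\col_i x i) (\col_i y i) i0 j0).
- exact: hubmx_sym.
- exact: hubmx_null.
- exact: hubmx_null.
- by move=> i; rewrite !mxE.
- move=> i j ij; rewrite !mxE.
  case: ifP => [/eqP eq_ij | _]; first by rewrite eq_ij eqxx in ij.
  case eij: (e i j); last by rewrite eqxx.
  move=> _; have [-> | iv] := eqVneq i v; first by rewrite xv yv !mul0r addr0.
  have [-> | jv] := eqVneq j v; first by rewrite xv yv !mulr0 addr0.
  have ij_punct : punctured e v i j by rewrite /punctured eij iv jv.
  rewrite (x_const _ _ ij_punct) (y_const _ _ ij_punct).
  by rewrite [y j * _]mulrC xy0 addr0.
- by rewrite mxE.
- by rewrite mxE.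
Qed.

Lemma hub_null_indicator (S : {set 'I_n}) a b :
  v \notin S -> closed (punctured e v) S -> nbhd e v :&: S = [set a; b] ->
  a != b -> w a + w b = 0 -> hub_null (fun i => (i \in S)%:R).
Proof.
move=> vS clS NS ab wab; split=> [|s t /clS -> //|].
  by rewrite (negbTE vS).
under eq_bigr do rewrite mulr_natr mulrb.
rewrite -big_mkcondr (eq_bigl [in nbhd e v :&: S]) => [|j]; last first.
  by rewrite in_setI.
by rewrite NS big_setU1 ?big_set1 // in_set1.
Qed.

End HubMatrix.

Section SeparatedPairs.
Variables (n : nat) (e : rel 'I_n) (v : 'I_n).
Hypotheses (e_sym : symmetric e) (e_irr : irreflexive e).

Lemma separated_pairs_not_GSSP (S T : {set 'I_n}) (a1 a2 a3 a4 : 'I_n) :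
  v \notin S -> v \notin T ->
  closed (punctured e v) S -> closed (punctured e v) T -> [disjoint S & T] ->
  a1 != a2 -> a3 != a4 ->
  nbhd e v :&: S = [set a1; a2] -> nbhd e v :&: T = [set a3; a4] ->
  ~ in_GSSP e.
Proof.
move=> vS vT clS clT dST a12 a34 NS NT.
have mem_S j : j \in [set a1; a2] -> j \in S by rewrite -NS => /setIP[].
have mem_T j : j \in [set a3; a4] -> j \in T by rewrite -NT => /setIP[].
have ST_neq j k : j \in [set a1; a2] -> k \in [set a3; a4] -> j != k.
  by move=> /mem_S jS /mem_T kT; apply: contraFneq (disjointFr dST jS) => ->.
pose w j : R := if (j == a1) || (j == a3) then 1 else -1.
have w_neq0 j : w j != 0 by rewrite /w; case: ifP; rewrite ?oppr_eq0 oner_eq0.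
have x_null : hub_null e v w (fun i => (i \in S)%:R).
  apply: (hub_null_indicator vS clS NS a12).
  rewrite /w eqxx (negbTE (ST_neq _ _ (set22 _ _) (set21 _ _))) orbF.
  by rewrite [a2 == a1]eq_sym (negbTE a12) addrN.
have y_null : hub_null e v w (fun i => (i \in T)%:R).
  apply: (hub_null_indicator vT clT NT a34).
  have a14 := ST_neq _ _ (set21 _ _) (set22 _ _).
  rewrite /w eqxx orbT [a4 == a1]eq_sym (negbTE a14).
  by rewrite [a4 == a3]eq_sym (negbTE a34) addrN.
move/(_ _ (hubmx_in_S (v := v) e_sym (fun j _ => w_neq0 j))).
apply: (hubmx_not_SSP e_sym e_irr x_null y_null (i0 := a1) (j0 := a3)).
- move=> i; case: (boolP (i \in S)) => [/(disjointFr dST) -> | _].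
  + by rewrite mulr0.
  + by rewrite mul0r.
- by rewrite /= mem_S ?set21 ?oner_eq0.
- by rewrite /= mem_T ?set21 ?oner_eq0.
Qed.

End SeparatedPairs.

Theorem corollary2p7 (n : nat) (e : rel 'I_n) (v : 'I_n) :
  simple_graph e -> (4 <= degree e v)%N -> on_at_most_one_cycle e v ->
  ~ in_GSSP e.
Proof.
move=> [e_sym e_irr] deg_v one_cycle.
have [S [T [a1 [a2 [a3 [a4 [[vS vT clS clT] dST [a12 a34 NS NT]]]]]]]] :=
  two_separated_pairs e_sym e_irr one_cycle deg_v.
exact: (separated_pairs_not_GSSP e_sym e_irr vS vT clS clT dST a12 a34 NS NT).
Qed.
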